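(* Let $S_1,S_2$ be strips and let $h:\partial S_1\to\partial S_2$ be a homeomorphism which is monotone (i.e. either preserves or reverses the partial order on the boundaries described in the context). Then $h$ extends to a foliated homeomorphism $\hat h:S_1\to S_2$ (with respect to the canonical foliations), i.e. $\hat h|_{\partial S_1}=h$.
   Context: A subset $S\subset\mathbb{R}^2$ is a strip if for some real numbers $u<v$ one has $\mathbb{R}\times(u,v)\subset S\subset\mathbb{R}\times[u,v]$ and $S$ is open in $\mathbb{R}\times[u,v]$. Put $\partial_-S=S\cap(\mathbb{R}\times\{u\})$, $\partial_+S=S\cap(\mathbb{R}\times\{v\})$, $\partial S=\partial_-S\cup\partial_+S$ (a disjoint union of open horizontal intervals, the boundary intervals). The canonical foliation of $S$ consists of the lines $\mathbb{R}\times\{t\}$, $t\in(u,v)$, and the boundary intervals. Partial order on $\partial S$: for $(a,x),(b,y)\in\partial S$, $(a,x)<(b,y)$ iff $a<b$ and $x=y$ (so $\partial_-S$ and $\partial_+S$ are each linearly ordered and mutually incomparable). For strips $S_1,S_2$, subsets $A\subset\partial S_1$, $B\subset\partial S_2$, a bijection $h:A\to B$ preserves order if for all $a,a'\in A$: $a<a'\iff h(a)<h(a')$; it reverses order if $a<a'\iff h(a)>h(a')$; it is monotone if it preserves or reverses order. A foliated homeomorphism maps leaves onto leaves. *)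

From Stdlib Require Import Reals.
Open Scope R_scope.

Definition pt := (R * R)%type.

(* Max-norm distance on R^2 (induces the standard topology). *)
Definition dist2 (p q : pt) : R :=
  Rmax (Rabs (fst p - fst q)) (Rabs (snd p - snd q)).

Definition cont_on (A : pt -> Prop) (f : pt -> pt) : Prop :=
  forall p, A p -> forall eps, 0 < eps ->
    exists delta, 0 < delta /\
      forall q, A q -> dist2 p q < delta -> dist2 (f p) (f q) < eps.

Definition homeo_on (A B : pt -> Prop) (f : pt -> pt) : Prop :=
  (forall p, A p -> B (f p)) /\
  exists g : pt -> pt,
    (forall q, B q -> A (g q)) /\
    (forall p, A p -> g (f p) = p) /\
    (forall q, B q -> f (g q) = q) /\
    cont_on A f /\ cont_on B g.

Definition is_strip (S : pt -> Prop) (u v : R) : Prop :=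
  u < v /\
  (forall p : pt, u < snd p < v -> S p) /\
  (forall p : pt, S p -> u <= snd p <= v) /\
  (forall p, S p -> exists eps, 0 < eps /\
     forall q : pt, u <= snd q <= v -> dist2 p q < eps -> S q).

Definition bd (S : pt -> Prop) (u v : R) (p : pt) : Prop :=
  S p /\ (snd p = u \/ snd p = v).

Definition bd_lt (p q : pt) : Prop := fst p < fst q /\ snd p = snd q.

Definition preserves_order (A : pt -> Prop) (h : pt -> pt) : Prop :=
  forall a a', A a -> A a' -> (bd_lt a a' <-> bd_lt (h a) (h a')).

Definition reverses_order (A : pt -> Prop) (h : pt -> pt) : Prop :=
  forall a a', A a -> A a' -> (bd_lt a a' <-> bd_lt (h a') (h a)).

Definition monotone (A : pt -> Prop) (h : pt -> pt) : Prop :=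
  preserves_order A h \/ reverses_order A h.

(* The boundary interval of ∂S containing p0 (its connected component):
   points q at the same height such that the whole horizontal segment
   between p0 and q lies in ∂S. *)
Definition bd_interval (S : pt -> Prop) (u v : R) (p0 q : pt) : Prop :=
  snd q = snd p0 /\
  forall x, Rmin (fst p0) (fst q) <= x <= Rmax (fst p0) (fst q) ->
    bd S u v (x, snd p0).

Definition leaf (S : pt -> Prop) (u v : R) (L : pt -> Prop) : Prop :=
  (exists t, u < t < v /\ forall q : pt, L q <-> snd q = t) \/
  (exists p0, bd S u v p0 /\ forall q, L q <-> bd_interval S u v p0 q).

Definition image (f : pt -> pt) (L : pt -> Prop) : pt -> Prop :=
  fun q => exists p, L p /\ q = f p.

Definition foliated_homeo (S1 : pt -> Prop) (u1 v1 : R)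
    (S2 : pt -> Prop) (u2 v2 : R) (H : pt -> pt) : Prop :=
  homeo_on S1 S2 H /\
  forall L, leaf S1 u1 v1 L -> leaf S2 u2 v2 (image H L).

From Stdlib Require Import Reals Lra Classical ClassicalEpsilon.
From Coquelicot Require Import Coquelicot.
Open Scope R_scope.

(* On each boundary line of [S1] the first coordinate of [h], multiplied by a
   sign [ep], is a strictly increasing continuous function [f] on an open subset
   of [R], and heights are matched by an affine map. On the line of relative
   height [s] in [(0, 1)] the extension is [x |-> ep * Phi x s], where
     [Phi x s = P_- x s + P_+ x (1 - s) + s (1 - s) x]
   and [P x s] is the sup-convolution of [squash o f] with a cone of slope
   [1/s], pulled back through a deformed inverse of [squash]. Each [P] is
   nondecreasing in [x], jointly continuous, bounded by [(1 - s)/s], and tends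
   to [f x] as [s -> 0] at points [x] of its boundary line; the linear term
   makes [Phi . s] an increasing bijection of [R]. Monotonicity in [x] turns
   these pointwise limits into joint ones, for [Phi] and for its inverse, which
   gives continuity of the extension and of its inverse at the boundary.
   Horizontal lines go to horizontal lines by construction, and boundary
   intervals to boundary intervals by the intermediate value theorem. *)

Ltac Rabs_cases := unfold Rabs in *; repeat match goal with
  | |- context [Rcase_abs ?x] => destruct (Rcase_abs x)
  | H : context [Rcase_abs ?x] |- _ => destruct (Rcase_abs x) end.

Lemma pair_eta (p : pt) : p = (fst p, snd p).
Proof. now destruct p. Qed.

Lemma dist2_lt_iff p q d :
  dist2 p q < d <-> Rabs (fst q - fst p) < d /\ Rabs (snd q - snd p) < d.
Proof.
  unfold dist2. rewrite (Rabs_minus_sym (fst q)), (Rabs_minus_sym (snd q)).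
  apply Rmax_Rlt.
Qed.

Lemma dist2_row x y c : dist2 (x, c) (y, c) = Rabs (x - y).
Proof.
  unfold dist2; simpl. rewrite Rminus_diag, Rabs_R0.
  apply Rmax_left, Rabs_pos.
Qed.

Lemma continuous_dist2 (f : R * R -> R) (p : R * R) : continuous f p <->
  forall eps, 0 < eps -> exists d, 0 < d /\
    forall q, dist2 p q < d -> Rabs (f q - f p) < eps.
Proof.
  split.
  - intros Hc eps He.
    destruct (proj1 (filterlim_locally f (f p)) Hc (mkposreal eps He)) as [[d Hd] Hb].
    exists d; split; [exact Hd|]. intros q Hq.
    apply (Hb q). now apply dist2_lt_iff.
  - intros H. apply filterlim_locally. intros [eps He].
    destruct (H eps He) as [d [Hd Hq]].
    exists (mkposreal d Hd). intros q Hb. apply Hq, dist2_lt_iff, Hb.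
Qed.

Lemma continuous_eps (f : R -> R) x : continuous f x <->
  forall eps, 0 < eps -> exists d, 0 < d /\
    forall y, Rabs (y - x) < d -> Rabs (f y - f x) < eps.
Proof.
  split.
  - intros Hc eps He.
    destruct (proj1 (filterlim_locally f (f x)) Hc (mkposreal eps He)) as [[d Hd] Hb].
    exists d; split; [exact Hd|]. intros y Hy. exact (Hb y Hy).
  - intros H. apply filterlim_locally. intros [eps He].
    destruct (H eps He) as [d [Hd Hq]].
    exists (mkposreal d Hd). intros y Hy. exact (Hq y Hy).
Qed.

Lemma continuity_continuous (f : R -> R) :
  (forall x, continuous f x) -> continuity f.
Proof. intros H x. apply continuity_pt_filterlim, H. Qed.

Lemma continuous_dist2_pair (F1 F2 : R * R -> R) (p : R * R) :
  continuous F1 p -> continuous F2 p ->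
  forall eps, 0 < eps -> exists d, 0 < d /\
    forall q, dist2 p q < d -> dist2 (F1 p, F2 p) (F1 q, F2 q) < eps.
Proof.
  intros C1 C2 eps He.
  destruct (proj1 (continuous_dist2 F1 p) C1 eps He) as [d1 [Hd1 K1]].
  destruct (proj1 (continuous_dist2 F2 p) C2 eps He) as [d2 [Hd2 K2]].
  exists (Rmin d1 d2). split; [now apply Rmin_pos|].
  intros q Hq. apply Rmin_Rgt in Hq as [Hq1 Hq2].
  apply dist2_lt_iff; split; [apply K1 | apply K2]; assumption.
Qed.

Lemma continuous_affine (a b t : R) : continuous (fun t => a + b * t) t.
Proof. apply (ex_derive_continuous (V := R_NormedModule)). auto_derive. trivial. Qed.

Lemma continuous_snd_comp (k : R -> R) (z : R * R) :
  continuous k (snd z) -> continuous (fun z : R * R => k (snd z)) z.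
Proof. intro Hk. apply (continuous_comp snd k); [apply continuous_snd | exact Hk]. Qed.

Lemma continuous_one_minus {U : UniformSpace} (g : U -> R) z :
  continuous g z -> continuous (fun y => 1 - g y) z.
Proof.
  intro Hg. apply (continuous_plus (fun _ => 1) (fun y => - g y)).
  - apply continuous_const.
  - now apply (continuous_opp g).
Qed.

(** * The squashing homeomorphism [R -> (-1, 1)] and its deformed inverses *)

Definition squash (y : R) : R := y / (1 + Rabs y).

Lemma squash_bound y : -1 < squash y < 1.
Proof.
  unfold squash.
  split; [apply Rlt_div_r | apply Rlt_div_l]; Rabs_cases; lra.
Qed.

Lemma squash_lt a b : a < b -> squash a < squash b.
Proof.
  intro H. unfold squash, Rdiv.
  apply (Rmult_lt_reg_r ((1 + Rabs a) * (1 + Rabs b))); [Rabs_cases; nra|].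
  replace (a * / (1 + Rabs a) * ((1 + Rabs a) * (1 + Rabs b))) with (a * (1 + Rabs b))
    by (field; Rabs_cases; lra).
  replace (b * / (1 + Rabs b) * ((1 + Rabs a) * (1 + Rabs b))) with (b * (1 + Rabs a))
    by (field; Rabs_cases; lra).
  Rabs_cases; nra.
Qed.

Lemma squash_le a b : a <= b -> squash a <= squash b.
Proof. intros [H | ->]; [left; now apply squash_lt | lra]. Qed.

Lemma squash_continuous y : continuous squash y.
Proof.
  apply (continuous_mult (fun x => x) (fun x => / (1 + Rabs x))).
  - apply continuous_id.
  - apply continuous_Rinv_comp; [|Rabs_cases; lra].
    apply (continuous_plus (fun _ => 1) Rabs).
    + apply continuous_const.
    + apply continuous_Rabs.
Qed.

(* A deformation of the inverse of [squash] (recovered at [s = 0]) bounded by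
   [(1 - s) / s], so that the contribution of one boundary line dies out near
   the other one. *)
Definition unsquash (w s : R) : R := (1 - s) * w / (1 - (1 - s) * Rabs w).

Lemma unsquash_squash y : unsquash (squash y) 0 = y.
Proof.
  unfold unsquash, squash. rewrite Rminus_0_r, !Rmult_1_l.
  assert (H : 0 < 1 + Rabs y) by (Rabs_cases; lra).
  rewrite Rabs_div by lra. rewrite (Rabs_pos_eq (1 + Rabs y)) by lra.
  replace (1 - Rabs y / (1 + Rabs y)) with (/ (1 + Rabs y)) by (field; lra).
  field. lra.
Qed.

Lemma Rdiv_le_cross x y D D' :
  0 < D -> 0 < D' -> x * D' <= y * D -> x / D <= y / D'.
Proof.
  intros HD HD' H.
  replace (x / D) with (x * D' / (D * D')) by (field; lra).
  replace (y / D') with (y * D / (D * D')) by (field; lra).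
  apply Rmult_le_compat_r; [| lra].
  left. apply Rinv_0_lt_compat. nra.
Qed.

Lemma unsquash_le w w' s : 0 < s < 1 -> Rabs w <= 1 -> Rabs w' <= 1 ->
  w <= w' -> unsquash w s <= unsquash w' s.
Proof.
  intros Hs Hw Hw' H. unfold unsquash.
  assert (0 <= Rabs w) by apply Rabs_pos. assert (0 <= Rabs w') by apply Rabs_pos.
  apply Rdiv_le_cross; [nra | nra |].
  set (a := 1 - s). assert (Ha : 0 < a < 1) by (unfold a; lra).
  assert (w * (1 - a * Rabs w') <= w' * (1 - a * Rabs w)).
  { destruct (Rle_or_lt 0 w); destruct (Rle_or_lt 0 w').
    - rewrite !Rabs_pos_eq by lra. nra.
    - lra.
    - rewrite (Rabs_pos_eq w') in * by lra. rewrite (Rabs_left w) in * by lra.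
      assert (0 <= (1 - a) * w') by (apply Rmult_le_pos; lra).
      assert (0 <= (1 - a) * - w) by (apply Rmult_le_pos; lra).
      assert (0 <= (- w) * (1 - a * w')) by (apply Rmult_le_pos; nra).
      assert (0 <= w' * (1 - a * - w)) by (apply Rmult_le_pos; nra).
      nra.
    - rewrite !Rabs_left by lra. nra. }
  nra.
Qed.

Lemma unsquash_bound w s : 0 < s < 1 -> Rabs w <= 1 ->
  Rabs (unsquash w s) <= (1 - s) / s.
Proof.
  intros Hs Hw. unfold unsquash. assert (0 <= Rabs w) by apply Rabs_pos.
  rewrite Rabs_div, Rabs_mult, (Rabs_pos_eq (1 - s)) by nra.
  rewrite (Rabs_pos_eq (1 - (1 - s) * Rabs w)) by nra.
  apply Rdiv_le_cross; nra.
Qed.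

Lemma unsquash_continuous w0 s0 : 0 < 1 - (1 - s0) * Rabs w0 ->
  continuous (fun z : R * R => unsquash (fst z) (snd z)) (w0, s0).
Proof.
  intro H. unfold unsquash.
  assert (Hs : continuous (fun z : R * R => 1 - snd z) (w0, s0))
    by apply continuous_one_minus, continuous_snd.
  apply (continuous_mult (fun z : R * R => (1 - snd z) * fst z)
                         (fun z : R * R => / (1 - (1 - snd z) * Rabs (fst z)))).
  - apply (continuous_mult (fun z : R * R => 1 - snd z) fst); [exact Hs | apply continuous_fst].
  - apply (continuous_comp (fun z : R * R => 1 - (1 - snd z) * Rabs (fst z)) Rinv);
      [apply continuous_one_minus | apply continuous_Rinv; simpl; lra].
    apply (continuous_mult (fun z : R * R => 1 - snd z) (fun z : R * R => Rabs (fst z)));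
      [exact Hs|].
    apply (continuous_comp fst Rabs); [apply continuous_fst | apply continuous_Rabs].
Qed.

Definition nondecreasing_on (B : R -> Prop) (f : R -> R) : Prop :=
  forall y z, B y -> B z -> y <= z -> f y <= f z.

Definition increasing_on (B : R -> Prop) (f : R -> R) : Prop :=
  forall y z, B y -> B z -> y < z -> f y < f z.

Definition continuous_within (B : R -> Prop) (f : R -> R) (x : R) : Prop :=
  forall eps, 0 < eps -> exists d, 0 < d /\
    forall y, B y -> Rabs (y - x) < d -> Rabs (f y - f x) < eps.

Lemma increasing_on_nondecreasing B f : increasing_on B f -> nondecreasing_on B f.
Proof. intros H y z Hy Hz [Hyz | <-]; [left; now apply H | lra]. Qed.

(** * A sup-convolution regularising [squash o f] *)

(* [-1] is added so that the set is nonempty even when [B] is empty. *)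
Definition envelope_set (B : R -> Prop) (f : R -> R) (x r e : R) : Prop :=
  e = -1 \/ exists y, B y /\ e = squash (f y) - Rabs r * Rmax 0 (y - x).

Lemma envelope_set_le_1 B f x r e : envelope_set B f x r e -> e <= 1.
Proof.
  intros [-> | [y [_ ->]]]; [lra|].
  assert (0 <= Rabs r * Rmax 0 (y - x))
    by (apply Rmult_le_pos; [apply Rabs_pos | apply Rmax_l]).
  generalize (squash_bound (f y)). lra.
Qed.

Definition envelope (B : R -> Prop) (f : R -> R) (x r : R) : R :=
  proj1_sig (completeness (envelope_set B f x r)
    (ex_intro _ 1 (envelope_set_le_1 B f x r))
    (ex_intro _ (-1) (or_introl eq_refl))).

Lemma envelope_is_lub B f x r : is_lub (envelope_set B f x r) (envelope B f x r).
Proof. unfold envelope. now destruct completeness. Qed.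

Lemma is_lub_shift A A' a a' c : is_lub A a -> is_lub A' a' ->
  (forall e, A e -> exists e', A' e' /\ e - c <= e') -> a - c <= a'.
Proof.
  intros [Hu Hl] [Hu' Hl'] H.
  enough (a <= a' + c) by lra.
  apply Hl. intros e He. destruct (H e He) as [e' [He' Hle]].
  generalize (Hu' e' He'). lra.
Qed.

Lemma Rabs_envelope_le B f x r : Rabs (envelope B f x r) <= 1.
Proof.
  destruct (envelope_is_lub B f x r) as [Hu Hl]. apply Rabs_le. split.
  - apply Hu. now left.
  - apply Hl. intros e. apply envelope_set_le_1.
Qed.

Lemma envelope_ge B f x r y : B y ->
  squash (f y) - Rabs r * Rmax 0 (y - x) <= envelope B f x r.
Proof. intro Hy. apply (envelope_is_lub B f x r). right. now exists y. Qed.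

Lemma envelope_le_x B f x x' r : x <= x' -> envelope B f x r <= envelope B f x' r.
Proof.
  intro Hx. enough (envelope B f x r - 0 <= envelope B f x' r) by lra.
  apply (is_lub_shift _ _ _ _ _ (envelope_is_lub B f x r) (envelope_is_lub B f x' r)).
  intros e [He | [y [Hy ->]]].
  - exists e. split; [now left | lra].
  - exists (squash (f y) - Rabs r * Rmax 0 (y - x')). split; [right; now exists y|].
    assert (Rmax 0 (y - x') <= Rmax 0 (y - x)) by (unfold Rmax; repeat destruct Rle_dec; lra).
    assert (0 <= Rabs r) by apply Rabs_pos. nra.
Qed.

Lemma envelope_lipschitz_x B f x x' r : 0 <= r ->
  Rabs (envelope B f x r - envelope B f x' r) <= r * Rabs (x - x').
Proof.
  intro Hr.
  assert (Hshift : forall x x', envelope B f x r - r * Rabs (x - x') <= envelope B f x' r).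
  { intros a a'.
    apply (is_lub_shift _ _ _ _ _ (envelope_is_lub B f a r) (envelope_is_lub B f a' r)).
    intros e [He | [y [Hy ->]]].
    - exists e. split; [now left|].
      assert (0 <= r * Rabs (a - a')) by (apply Rmult_le_pos; [lra | apply Rabs_pos]). lra.
    - exists (squash (f y) - Rabs r * Rmax 0 (y - a')). split; [right; now exists y|].
      rewrite Rabs_pos_eq by lra.
      assert (Rmax 0 (y - a') <= Rmax 0 (y - a) + Rabs (a - a'))
        by (unfold Rmax; repeat destruct Rle_dec; Rabs_cases; lra).
      nra. }
  generalize (Hshift x x') (Hshift x' x). rewrite (Rabs_minus_sym x').
  intros. apply Rabs_le. lra.
Qed.

Lemma envelope_le_r B f x r r' : 0 <= r -> r <= r' ->
  envelope B f x r' <= envelope B f x r.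
Proof.
  intros Hr Hr'. enough (envelope B f x r' - 0 <= envelope B f x r) by lra.
  apply (is_lub_shift _ _ _ _ _ (envelope_is_lub B f x r') (envelope_is_lub B f x r)).
  intros e [He | [y [Hy ->]]].
  - exists e. split; [now left | lra].
  - exists (squash (f y) - Rabs r * Rmax 0 (y - x)). split; [right; now exists y|].
    rewrite !Rabs_pos_eq by lra. assert (0 <= Rmax 0 (y - x)) by apply Rmax_l. nra.
Qed.

(* Once the cone term exceeds [2], the candidate is dominated by [-1]; this
   makes the envelope Lipschitz in [r] on [[1, +oo)]. *)
Lemma envelope_lipschitz_r B f x r r' : 1 <= r -> 1 <= r' ->
  Rabs (envelope B f x r - envelope B f x r') <= 2 * Rabs (r - r').
Proof.
  assert (Hdrop : forall r r', 1 <= r -> r <= r' ->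
    envelope B f x r - 2 * (r' - r) <= envelope B f x r').
  { intros a a' Ha Ha'.
    apply (is_lub_shift _ _ _ _ _ (envelope_is_lub B f x a) (envelope_is_lub B f x a')).
    intros e [He | [y [Hy ->]]].
    - exists e. split; [now left | lra].
    - rewrite !Rabs_pos_eq by lra. set (m := Rmax 0 (y - x)).
      assert (Hm : 0 <= m) by apply Rmax_l. generalize (squash_bound (f y)); intro Hs.
      destruct (Rle_or_lt 2 (a * m)).
      + exists (-1). split; [now left | lra].
      + exists (squash (f y) - Rabs a' * m). split; [right; now exists y|].
        rewrite Rabs_pos_eq by lra. assert (m < 2) by nra. nra. }
  intros Hr Hr'. apply Rabs_le.
  destruct (Rle_or_lt r r').
  - generalize (Hdrop r r' Hr ltac:(lra)) (envelope_le_r B f x r r' ltac:(lra) ltac:(lra)).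
    Rabs_cases; lra.
  - generalize (Hdrop r' r Hr' ltac:(lra)) (envelope_le_r B f x r' r ltac:(lra) ltac:(lra)).
    Rabs_cases; lra.
Qed.

Lemma envelope_continuous B f x0 r0 : 1 < r0 ->
  continuous (fun z : R * R => envelope B f (fst z) (snd z)) (x0, r0).
Proof.
  intro Hr0. apply continuous_dist2. intros eps He.
  set (d := Rmin (Rmin ((r0 - 1) / 2) 1) (eps / (r0 + 4))).
  assert (Hd : 0 < d)
    by (repeat apply Rmin_pos; try apply Rdiv_lt_0_compat; lra).
  assert (Hd1 : d <= Rmin ((r0 - 1) / 2) 1) by apply Rmin_l.
  assert (Hd2 : d * (r0 + 4) <= eps) by (apply Rle_div_r; [lra | apply Rmin_r]).
  generalize (Rmin_l ((r0 - 1) / 2) 1) (Rmin_r ((r0 - 1) / 2) 1); intros.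
  exists d. split; [exact Hd|].
  intros [x r] Hq; apply dist2_lt_iff in Hq as [Hx Hr]; simpl in *.
  assert (Hr1 : 1 <= r) by (Rabs_cases; lra).
  assert (Hr2 : r <= r0 + 1) by (Rabs_cases; lra).
  assert (A1 := envelope_lipschitz_x B f x x0 r ltac:(lra)).
  assert (A2 := envelope_lipschitz_r B f x0 r r0 Hr1 ltac:(lra)).
  assert (r * Rabs (x - x0) <= (r0 + 1) * d)
    by (apply Rmult_le_compat; try lra; apply Rabs_pos).
  assert (Rabs (envelope B f x r - envelope B f x0 r0) <=
      Rabs (envelope B f x r - envelope B f x0 r) + Rabs (envelope B f x0 r - envelope B f x0 r0)).
  { replace (envelope B f x r - envelope B f x0 r0)
      with ((envelope B f x r - envelope B f x0 r) + (envelope B f x0 r - envelope B f x0 r0))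
      by ring.
    apply Rabs_triang. }
  nra.
Qed.

(* Points of [B] left of [x] contribute at most [squash (f x)] by monotonicity,
   nearby points on the right by continuity, and far ones are killed by the cone. *)
Lemma envelope_limit B f x : nondecreasing_on B f -> continuous_within B f x -> B x ->
  forall eps, 0 < eps -> exists R0, 1 <= R0 /\
    forall r, R0 <= r -> Rabs (envelope B f x r - squash (f x)) < eps.
Proof.
  intros Hmon Hc Hx eps He.
  destruct (proj1 (continuous_eps squash (f x)) (squash_continuous (f x)) (eps / 2))
    as [eta [Heta Hs]]; [lra|].
  destruct (Hc eta Heta) as [d [Hd Hfd]].
  exists (Rmax 1 (2 / d)). split; [apply Rmax_l|].
  intros r Hr. assert (Hr1 : 1 <= r) by (eapply Rle_trans; [apply Rmax_l | exact Hr]).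
  assert (Hr2 : 2 <= r * d)
    by (apply Rle_div_l; [lra | eapply Rle_trans; [apply Rmax_r | exact Hr]]).
  assert (Hlow : squash (f x) <= envelope B f x r).
  { generalize (envelope_ge B f x r x Hx). rewrite Rminus_diag, Rmax_left by lra. lra. }
  assert (Hup : envelope B f x r <= squash (f x) + eps / 2).
  { apply (envelope_is_lub B f x r).
    intros e [-> | [y [Hy ->]]].
    - generalize (squash_bound (f x)). lra.
    - rewrite Rabs_pos_eq by lra.
      assert (Hm : 0 <= Rmax 0 (y - x)) by apply Rmax_l.
      destruct (Rle_or_lt y x).
      + assert (squash (f y) <= squash (f x)) by (apply squash_le, Hmon; auto). nra.
      + destruct (Rlt_or_le y (x + d)).
        * assert (Rabs (squash (f y) - squash (f x)) < eps / 2)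
            by (apply Hs, Hfd; auto; Rabs_cases; lra).
          Rabs_cases; nra.
        * rewrite Rmax_right by lra. generalize (squash_bound (f y)) (squash_bound (f x)). nra. }
  Rabs_cases; lra.
Qed.

(** * A family of increasing homeomorphisms interpolating two boundary maps *)

Definition profile (B : R -> Prop) (f : R -> R) (x s : R) : R :=
  unsquash (envelope B f x (/ s)) s.

Lemma profile_le_x B f x x' s : 0 < s < 1 -> x <= x' -> profile B f x s <= profile B f x' s.
Proof.
  intros Hs Hx. apply unsquash_le; auto using Rabs_envelope_le. now apply envelope_le_x.
Qed.

Lemma Rabs_profile_le B f x s : 0 < s < 1 -> Rabs (profile B f x s) <= (1 - s) / s.
Proof. intro Hs. apply unsquash_bound; auto using Rabs_envelope_le. Qed.

Lemma profile_continuous B f x0 s0 : 0 < s0 < 1 ->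
  continuous (fun z : R * R => profile B f (fst z) (snd z)) (x0, s0).
Proof.
  intro Hs. unfold profile.
  apply (continuous_comp_2 (fun z : R * R => envelope B f (fst z) (/ snd z)) snd unsquash).
  - apply (continuous_comp_2 fst (fun z : R * R => / snd z) (envelope B f)).
    + apply continuous_fst.
    + apply (continuous_comp snd Rinv); [apply continuous_snd | apply continuous_Rinv; simpl; lra].
    + apply envelope_continuous. simpl. rewrite <- Rinv_1. apply Rinv_lt_contravar; lra.
  - apply continuous_snd.
  - apply unsquash_continuous. generalize (Rabs_envelope_le B f x0 (/ s0)). simpl. nra.
Qed.

Lemma profile_limit B f x : nondecreasing_on B f -> continuous_within B f x -> B x ->
  forall eps, 0 < eps -> exists d, 0 < d /\
    forall s, 0 < s -> s < d -> Rabs (profile B f x s - f x) < eps.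
Proof.
  intros Hmon Hc Hx eps He.
  assert (HQ := unsquash_continuous (squash (f x)) 0).
  rewrite Rminus_0_r, Rmult_1_l in HQ.
  specialize (HQ ltac:(generalize (squash_bound (f x)); intros; Rabs_cases; lra)).
  destruct (proj1 (continuous_dist2 _ _) HQ eps He) as [eta [Heta Hq]].
  simpl in Hq. rewrite unsquash_squash in Hq.
  destruct (envelope_limit B f x Hmon Hc Hx eta Heta) as [R0 [HR0 HR]].
  exists (Rmin eta (/ R0)). split; [apply Rmin_pos; [lra | apply Rinv_0_lt_compat; lra]|].
  intros s Hs Hsd. apply Rmin_Rgt in Hsd as [Hs1 Hs2].
  apply (Hq (envelope B f x (/ s), s)), dist2_lt_iff. simpl. split.
  - apply HR. rewrite <- (Rinv_inv R0). left. apply Rinv_lt_contravar; nra.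
  - Rabs_cases; lra.
Qed.

(* The linear term [s (1 - s) x] makes each [interp _ _ _ _ . s] a strictly
   increasing bijection of [R]; the profiles carry the boundary values. *)
Definition interp (Bm : R -> Prop) (fm : R -> R) (Bp : R -> Prop) (fp : R -> R)
    (x s : R) : R :=
  profile Bm fm x s + profile Bp fp x (1 - s) + s * (1 - s) * x.

Section Interp.
Variables (Bm Bp : R -> Prop) (fm fp : R -> R).

Lemma interp_swap x s : interp Bm fm Bp fp x s = interp Bp fp Bm fm x (1 - s).
Proof. unfold interp. replace (1 - (1 - s)) with s by ring. ring. Qed.

Lemma interp_lt_x x x' s : 0 < s < 1 -> x < x' ->
  interp Bm fm Bp fp x s < interp Bm fm Bp fp x' s.
Proof.
  intros Hs Hx. unfold interp.
  generalize (profile_le_x Bm fm x x' s Hs ltac:(lra))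
    (profile_le_x Bp fp x x' (1 - s) ltac:(lra) ltac:(lra)).
  assert (0 < s * (1 - s)) by nra. nra.
Qed.

Lemma interp_continuous x0 s0 : 0 < s0 < 1 ->
  continuous (fun z : R * R => interp Bm fm Bp fp (fst z) (snd z)) (x0, s0).
Proof.
  intro Hs. unfold interp.
  assert (Hs' : continuous (fun z : R * R => 1 - snd z) (x0, s0))
    by apply continuous_one_minus, continuous_snd.
  apply (continuous_plus
    (fun z : R * R => profile Bm fm (fst z) (snd z) + profile Bp fp (fst z) (1 - snd z))
    (fun z : R * R => snd z * (1 - snd z) * fst z)).
  - apply (continuous_plus (fun z : R * R => profile Bm fm (fst z) (snd z))
                           (fun z : R * R => profile Bp fp (fst z) (1 - snd z))).
    + now apply profile_continuous.
    + apply (continuous_comp_2 fst (fun z : R * R => 1 - snd z) (profile Bp fp));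
        [apply continuous_fst | exact Hs' | apply profile_continuous; simpl; lra].
  - apply (continuous_mult (fun z : R * R => snd z * (1 - snd z)) fst);
      [apply (continuous_mult snd (fun z : R * R => 1 - snd z)) | apply continuous_fst].
    + apply continuous_snd.
    + exact Hs'.
Qed.

Lemma interp_surjective s y : 0 < s < 1 -> exists x, interp Bm fm Bp fp x s = y.
Proof.
  intro Hs. set (Phi := fun x => interp Bm fm Bp fp x s).
  assert (Hp : 0 < s * (1 - s)) by nra.
  set (b := Rabs (y - Phi 0) / (s * (1 - s))).
  assert (Hb : 0 <= b) by (apply Rle_div_r; [exact Hp | rewrite Rmult_0_l; apply Rabs_pos]).
  assert (Hbb : b * (s * (1 - s)) = Rabs (y - Phi 0)) by (unfold b; field; lra).
  assert (H1 : Phi 0 + s * (1 - s) * b <= Phi b).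
  { unfold Phi, interp.
    generalize (profile_le_x Bm fm 0 b s Hs Hb) (profile_le_x Bp fp 0 b (1 - s) ltac:(lra) Hb).
    lra. }
  assert (H2 : Phi (- b) <= Phi 0 - s * (1 - s) * b).
  { unfold Phi, interp.
    generalize (profile_le_x Bm fm (- b) 0 s Hs ltac:(lra))
      (profile_le_x Bp fp (- b) 0 (1 - s) ltac:(lra) ltac:(lra)).
    lra. }
  assert (HPhi : continuity Phi).
  { apply continuity_continuous. intro x.
    apply (continuous_comp_2 (fun x => x) (fun _ => s) (interp Bm fm Bp fp));
      [apply continuous_id | apply continuous_const | now apply interp_continuous]. }
  destruct (IVT_gen Phi (- b) b y HPhi) as [x [_ Hx]]; [|now exists x].
  split.
  - eapply Rle_trans; [apply Rmin_l|]. Rabs_cases; nra.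
  - eapply Rle_trans; [|apply Rmax_r]. Rabs_cases; nra.
Qed.

Lemma interp_limit_0 x : nondecreasing_on Bm fm -> continuous_within Bm fm x -> Bm x ->
  forall eps, 0 < eps -> exists d, 0 < d /\
    forall s, 0 < s < 1 -> s < d -> Rabs (interp Bm fm Bp fp x s - fm x) < eps.
Proof.
  intros Hmon Hc Hx eps He.
  destruct (profile_limit Bm fm x Hmon Hc Hx (eps / 3) ltac:(lra)) as [d [Hd Hlim]].
  set (c := eps / (3 * (Rabs x + 1))).
  assert (Hc0 : 0 < c) by (apply Rdiv_lt_0_compat; [lra | generalize (Rabs_pos x); lra]).
  assert (Hcx : c * Rabs x < eps / 3).
  { apply (Rmult_lt_reg_r (3 * (Rabs x + 1))); [generalize (Rabs_pos x); lra|].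
    unfold c. field_simplify; [|generalize (Rabs_pos x); lra].
    generalize (Rabs_pos x). nra. }
  exists (Rmin (Rmin d (1 / 2)) (Rmin (eps / 6) c)).
  split; [repeat apply Rmin_pos; lra|].
  intros s Hs Hsd. apply Rmin_Rgt in Hsd as [Hsd1 Hsd2].
  apply Rmin_Rgt in Hsd1 as [Hsd Hs2]. apply Rmin_Rgt in Hsd2 as [Hs6 Hsc].
  specialize (Hlim s ltac:(lra) Hsd).
  assert (Hother : Rabs (profile Bp fp x (1 - s)) <= 2 * s).
  { eapply Rle_trans; [apply Rabs_profile_le; lra|].
    apply Rle_div_l; nra. }
  assert (Hlin : Rabs (s * (1 - s) * x) <= s * Rabs x).
  { rewrite !Rabs_mult, (Rabs_pos_eq s), (Rabs_pos_eq (1 - s)) by lra.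
    generalize (Rabs_pos x). nra. }
  assert (s * Rabs x <= c * Rabs x) by (apply Rmult_le_compat_r; [apply Rabs_pos | lra]).
  unfold interp.
  replace (profile Bm fm x s + profile Bp fp x (1 - s) + s * (1 - s) * x - fm x)
    with ((profile Bm fm x s - fm x) + profile Bp fp x (1 - s) + s * (1 - s) * x) by ring.
  eapply Rle_lt_trans; [apply Rabs_triang|].
  eapply Rle_lt_trans; [apply Rplus_le_compat_r, Rabs_triang|].
  lra.
Qed.

End Interp.

Definition boundary_limit (Phi : R -> R -> R) (s0 : R) (B : R -> Prop) (f : R -> R) : Prop :=
  forall x, B x -> forall eps, 0 < eps -> exists d, 0 < d /\
    forall s, 0 < s < 1 -> Rabs (s - s0) < d -> Rabs (Phi x s - f x) < eps.

Lemma interp_boundary_limit_0 Bm fm Bp fp :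
  nondecreasing_on Bm fm -> (forall x, Bm x -> continuous_within Bm fm x) ->
  boundary_limit (interp Bm fm Bp fp) 0 Bm fm.
Proof.
  intros Hmon Hc x Hx eps He.
  destruct (interp_limit_0 Bm Bp fm fp x Hmon (Hc x Hx) Hx eps He) as [d [Hd Hlim]].
  exists d. split; [exact Hd|]. intros s Hs Hsd. apply Hlim; [exact Hs | Rabs_cases; lra].
Qed.

Lemma interp_boundary_limit_1 Bm fm Bp fp :
  nondecreasing_on Bp fp -> (forall x, Bp x -> continuous_within Bp fp x) ->
  boundary_limit (interp Bm fm Bp fp) 1 Bp fp.
Proof.
  intros Hmon Hc x Hx eps He.
  destruct (interp_limit_0 Bp Bm fp fm x Hmon (Hc x Hx) Hx eps He) as [d [Hd Hlim]].
  exists d. split; [exact Hd|]. intros s Hs Hsd.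
  rewrite interp_swap. apply Hlim; Rabs_cases; lra.
Qed.

(** * Inverting a continuous family of increasing bijections *)

Definition family_inv (Phi : R -> R -> R) (y s : R) : R :=
  epsilon (inhabits 0) (fun x => Phi x s = y).

Section FamilyInverse.
Variable Phi : R -> R -> R.
Hypothesis Phi_lt : forall s x x', 0 < s < 1 -> x < x' -> Phi x s < Phi x' s.
Hypothesis Phi_surjective : forall s y, 0 < s < 1 -> exists x, Phi x s = y.
Hypothesis Phi_continuous : forall x0 s0, 0 < s0 < 1 ->
  continuous (fun z : R * R => Phi (fst z) (snd z)) (x0, s0).

Lemma family_lt_reflect s x x' : 0 < s < 1 -> Phi x s < Phi x' s -> x < x'.
Proof.
  intros Hs H. destruct (Rlt_or_le x x') as [|Hle]; [assumption|].
  destruct Hle as [Hlt | ->]; [generalize (Phi_lt s x' x Hs Hlt) |]; lra.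
Qed.

Lemma family_le s x x' : 0 < s < 1 -> x <= x' -> Phi x s <= Phi x' s.
Proof. intros Hs [H | ->]; [left; now apply Phi_lt | lra]. Qed.

Lemma family_inv_spec y s : 0 < s < 1 -> Phi (family_inv Phi y s) s = y.
Proof. intro Hs. unfold family_inv. apply epsilon_spec, Phi_surjective, Hs. Qed.

Lemma family_inv_cancel x s : 0 < s < 1 -> family_inv Phi (Phi x s) s = x.
Proof.
  intro Hs. set (x' := family_inv Phi (Phi x s) s).
  assert (Hx' : Phi x' s = Phi x s) by now apply family_inv_spec.
  destruct (Rtotal_order x' x) as [H | [H | H]]; [| exact H |];
    apply (Phi_lt s) in H; auto; lra.
Qed.

Lemma family_continuous_s x0 s0 : 0 < s0 < 1 -> forall eps, 0 < eps -> exists d, 0 < d /\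
  forall s, Rabs (s - s0) < d -> Rabs (Phi x0 s - Phi x0 s0) < eps.
Proof.
  intros Hs eps He.
  destruct (proj1 (continuous_dist2 _ _) (Phi_continuous x0 s0 Hs) eps He) as [d [Hd Hq]].
  exists d. split; [exact Hd|]. intros s Hsd.
  apply (Hq (x0, s)), dist2_lt_iff. simpl. rewrite Rminus_diag, Rabs_R0. lra.
Qed.

(* [x0 - eps/2 < family_inv y s < x0 + eps/2] as soon as [y] lies strictly between
   [Phi (x0 -+ eps/2) s], which holds near [(y0, s0)] by continuity in [s]. *)
Lemma family_inv_continuous y0 s0 : 0 < s0 < 1 ->
  continuous (fun z : R * R => family_inv Phi (fst z) (snd z)) (y0, s0).
Proof.
  intro Hs. apply continuous_dist2. intros eps He.
  set (x0 := family_inv Phi y0 s0).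
  assert (Hx0 : Phi x0 s0 = y0) by now apply family_inv_spec.
  set (a := x0 - eps / 2). set (b := x0 + eps / 2).
  assert (Ha : Phi a s0 < y0) by (rewrite <- Hx0; apply Phi_lt; unfold a; lra).
  assert (Hb : y0 < Phi b s0) by (rewrite <- Hx0; apply Phi_lt; unfold b; lra).
  set (g := Rmin (y0 - Phi a s0) (Phi b s0 - y0) / 2).
  assert (Hg : 0 < g) by (apply Rdiv_lt_0_compat; [apply Rmin_pos |]; lra).
  assert (Hg1 : 2 * g <= y0 - Phi a s0)
    by (unfold g; generalize (Rmin_l (y0 - Phi a s0) (Phi b s0 - y0)); lra).
  assert (Hg2 : 2 * g <= Phi b s0 - y0)
    by (unfold g; generalize (Rmin_r (y0 - Phi a s0) (Phi b s0 - y0)); lra).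
  destruct (family_continuous_s a s0 Hs g Hg) as [da [Hda Ka]].
  destruct (family_continuous_s b s0 Hs g Hg) as [db [Hdb Kb]].
  exists (Rmin (Rmin da db) (Rmin g (Rmin s0 (1 - s0)))).
  split; [repeat apply Rmin_pos; lra|].
  intros [y s] Hq. apply dist2_lt_iff in Hq as [Hy Hsq]. simpl in *.
  apply Rmin_Rgt in Hy as [_ Hy]. apply Rmin_Rgt in Hy as [Hyg _].
  apply Rmin_Rgt in Hsq as [Hsq Hsq']. apply Rmin_Rgt in Hsq as [Hsa Hsb].
  apply Rmin_Rgt in Hsq' as [_ Hsq']. apply Rmin_Rgt in Hsq' as [Hs1 Hs2].
  assert (Hs' : 0 < s < 1) by (Rabs_cases; lra).
  specialize (Ka s Hsa). specialize (Kb s Hsb).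
  fold x0. set (x := family_inv Phi y s).
  assert (Hx : Phi x s = y) by now apply family_inv_spec.
  assert (a < x) by (apply (family_lt_reflect s); auto; Rabs_cases; lra).
  assert (x < b) by (apply (family_lt_reflect s); auto; Rabs_cases; lra).
  unfold a, b in *. Rabs_cases; lra.
Qed.

Variables (B : R -> Prop) (f : R -> R) (s0 : R).
Hypothesis Phi_limit : boundary_limit Phi s0 B f.

Lemma family_joint_limit x0 : B x0 -> (exists rho, 0 < rho /\ forall y, Rabs (y - x0) < rho -> B y) ->
  continuous_within B f x0 ->
  forall eps, 0 < eps -> exists d, 0 < d /\ forall x s, 0 < s < 1 -> Rabs (s - s0) < d ->
    Rabs (x - x0) < d -> Rabs (Phi x s - f x0) < eps.
Proof.
  intros Hx0 [rho [Hrho HB]] Hfc eps He.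
  destruct (Hfc (eps / 2) ltac:(lra)) as [eta [Heta Hf]].
  set (m := Rmin eta rho / 2).
  assert (Hm : 0 < m) by (apply Rdiv_lt_0_compat; [apply Rmin_pos |]; lra).
  assert (Hm1 : m < eta) by (unfold m; generalize (Rmin_l eta rho); lra).
  assert (Hm2 : m < rho) by (unfold m; generalize (Rmin_r eta rho); lra).
  assert (Ba : B (x0 - m)) by (apply HB; Rabs_cases; lra).
  assert (Bb : B (x0 + m)) by (apply HB; Rabs_cases; lra).
  assert (Fa : Rabs (f (x0 - m) - f x0) < eps / 2) by (apply Hf; auto; Rabs_cases; lra).
  assert (Fb : Rabs (f (x0 + m) - f x0) < eps / 2) by (apply Hf; auto; Rabs_cases; lra).
  destruct (Phi_limit _ Ba (eps / 2) ltac:(lra)) as [da [Hda Ka]].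
  destruct (Phi_limit _ Bb (eps / 2) ltac:(lra)) as [db [Hdb Kb]].
  exists (Rmin (Rmin da db) m). split; [repeat apply Rmin_pos; lra|].
  intros x s Hs Hsd Hxd.
  apply Rmin_Rgt in Hsd as [Hsd _]. apply Rmin_Rgt in Hsd as [Hsa Hsb].
  apply Rmin_Rgt in Hxd as [_ Hxm].
  specialize (Ka s Hs Hsa). specialize (Kb s Hs Hsb).
  assert (Phi (x0 - m) s <= Phi x s) by (apply family_le; auto; Rabs_cases; lra).
  assert (Phi x s <= Phi (x0 + m) s) by (apply family_le; auto; Rabs_cases; lra).
  Rabs_cases; lra.
Qed.

Lemma family_inv_joint_limit x0 : increasing_on B f -> B x0 ->
  (exists rho, 0 < rho /\ forall y, Rabs (y - x0) < rho -> B y) ->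
  forall eps, 0 < eps -> exists d, 0 < d /\ forall y s, 0 < s < 1 -> Rabs (s - s0) < d ->
    Rabs (y - f x0) < d -> Rabs (family_inv Phi y s - x0) < eps.
Proof.
  intros Hf Hx0 [rho [Hrho HB]] eps He.
  set (m := Rmin eps rho / 2).
  assert (Hm : 0 < m) by (apply Rdiv_lt_0_compat; [apply Rmin_pos |]; lra).
  assert (Hm1 : m < eps) by (unfold m; generalize (Rmin_l eps rho); lra).
  assert (Hm2 : m < rho) by (unfold m; generalize (Rmin_r eps rho); lra).
  assert (Ba : B (x0 - m)) by (apply HB; Rabs_cases; lra).
  assert (Bb : B (x0 + m)) by (apply HB; Rabs_cases; lra).
  assert (Fa : f (x0 - m) < f x0) by (apply Hf; auto; lra).
  assert (Fb : f x0 < f (x0 + m)) by (apply Hf; auto; lra).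
  set (g := Rmin (f x0 - f (x0 - m)) (f (x0 + m) - f x0) / 2).
  assert (Hg : 0 < g) by (apply Rdiv_lt_0_compat; [apply Rmin_pos |]; lra).
  assert (Hg1 : 2 * g <= f x0 - f (x0 - m))
    by (unfold g; generalize (Rmin_l (f x0 - f (x0 - m)) (f (x0 + m) - f x0)); lra).
  assert (Hg2 : 2 * g <= f (x0 + m) - f x0)
    by (unfold g; generalize (Rmin_r (f x0 - f (x0 - m)) (f (x0 + m) - f x0)); lra).
  destruct (Phi_limit _ Ba g Hg) as [da [Hda Ka]].
  destruct (Phi_limit _ Bb g Hg) as [db [Hdb Kb]].
  exists (Rmin (Rmin da db) g). split; [repeat apply Rmin_pos; lra|].
  intros y s Hs Hsd Hy.
  apply Rmin_Rgt in Hsd as [Hsd _]. apply Rmin_Rgt in Hsd as [Hsa Hsb].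
  apply Rmin_Rgt in Hy as [_ Hyg].
  specialize (Ka s Hs Hsa). specialize (Kb s Hs Hsb).
  set (x := family_inv Phi y s).
  assert (Hx : Phi x s = y) by now apply family_inv_spec.
  assert (x0 - m < x) by (apply (family_lt_reflect s); auto; Rabs_cases; lra).
  assert (x < x0 + m) by (apply (family_lt_reflect s); auto; Rabs_cases; lra).
  Rabs_cases; lra.
Qed.

End FamilyInverse.

(** * Monotone homeomorphisms between strip boundaries *)

Lemma strip_row_open S u v x c : is_strip S u v -> S (x, c) ->
  exists rho, 0 < rho /\ forall y, Rabs (y - x) < rho -> S (y, c).
Proof.
  intros [_ [_ [Hsub Hopen]]] Hx.
  destruct (Hopen _ Hx) as [e [He Hq]]. exists e. split; [exact He|].
  intros y Hy. apply Hq.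
  - apply Hsub in Hx. exact Hx.
  - rewrite dist2_row, Rabs_minus_sym. exact Hy.
Qed.

Lemma strip_interior S u v p : is_strip S u v -> S p -> snd p <> u -> snd p <> v ->
  u < snd p < v.
Proof. intros [_ [_ [Hsub _]]] Hp Hu Hv. apply Hsub in Hp. lra. Qed.

Lemma homeo_on_injective A B k : homeo_on A B k ->
  forall p p', A p -> A p' -> k p = k p' -> p = p'.
Proof.
  intros [_ [g [_ [Hgk _]]]] p p' Hp Hp' He.
  now rewrite <- (Hgk p Hp), <- (Hgk p' Hp'), He.
Qed.

Lemma monotone_bd_lt A k : monotone A k -> forall p p', A p -> A p' ->
  bd_lt p p' -> bd_lt (k p) (k p') \/ bd_lt (k p') (k p).
Proof. intros [Hm | Hm] p p' Hp Hp' Hl; [left | right]; now apply (Hm p p'). Qed.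

Lemma monotone_same_height A k : monotone A k -> forall p p', A p -> A p' ->
  snd p = snd p' -> snd (k p) = snd (k p').
Proof.
  intros Hm p p' Hp Hp' Hs.
  destruct (Rtotal_order (fst p) (fst p')) as [Hlt | [Heq | Hgt]].
  - destruct (monotone_bd_lt A k Hm p p' Hp Hp' (conj Hlt Hs)) as [[_ H] | [_ H]]; auto.
  - now rewrite (pair_eta p), (pair_eta p'), Heq, Hs.
  - destruct (monotone_bd_lt A k Hm p' p Hp' Hp (conj Hgt (eq_sym Hs))) as [[_ H] | [_ H]]; auto.
Qed.

Lemma monotone_diff_height A k : monotone A k ->
  (forall p p', A p -> A p' -> k p = k p' -> p = p') ->
  forall p p', A p -> A p' -> snd p <> snd p' -> snd (k p) <> snd (k p').
Proof.
  intros Hm Hinj p p' Hp Hp' Hs Hk.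
  destruct (Rtotal_order (fst (k p)) (fst (k p'))) as [Hlt | [Heq | Hgt]].
  - destruct Hm as [Hm | Hm].
    + destruct (proj2 (Hm p p' Hp Hp') (conj Hlt Hk)) as [_ H]. contradiction.
    + destruct (proj2 (Hm p' p Hp' Hp) (conj Hlt Hk)) as [_ H]. auto.
  - apply Hs. f_equal. apply Hinj; auto.
    now rewrite (pair_eta (k p)), (pair_eta (k p')), Heq, Hk.
  - destruct Hm as [Hm | Hm].
    + destruct (proj2 (Hm p' p Hp' Hp) (conj Hgt (eq_sym Hk))) as [_ H]. auto.
    + destruct (proj2 (Hm p p' Hp Hp') (conj Hgt (eq_sym Hk))) as [_ H]. contradiction.
Qed.

(* A boundary component of [S1] may be empty, so where it goes has to be chosen
   by excluded middle in a way compatible with the other one. *)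
Lemma boundary_heights S1 u1 v1 S2 u2 v2 h : is_strip S1 u1 v1 -> is_strip S2 u2 v2 ->
  homeo_on (bd S1 u1 v1) (bd S2 u2 v2) h -> monotone (bd S1 u1 v1) h ->
  exists c_lo c_hi, ((c_lo = u2 /\ c_hi = v2) \/ (c_lo = v2 /\ c_hi = u2)) /\
   (forall x, S1 (x, u1) -> snd (h (x, u1)) = c_lo) /\
   (forall x, S1 (x, v1) -> snd (h (x, v1)) = c_hi).
Proof.
  intros [Huv1 _] _ Hh Hm.
  assert (Hto : forall x c, S1 (x, c) -> c = u1 \/ c = v1 ->
      snd (h (x, c)) = u2 \/ snd (h (x, c)) = v2)
    by (intros x c Hx Hc; destruct Hh as [Hmap _]; now apply (Hmap (x, c))).
  assert (Hsame : forall x y c, S1 (x, c) -> S1 (y, c) -> c = u1 \/ c = v1 ->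
      snd (h (x, c)) = snd (h (y, c)))
    by (intros; apply (monotone_same_height _ h Hm); split; auto).
  assert (Hdiff : forall x y, S1 (x, u1) -> S1 (y, v1) -> snd (h (x, u1)) <> snd (h (y, v1))).
  { intros x y Hx Hy. apply (monotone_diff_height _ h Hm (homeo_on_injective _ _ _ Hh));
      [split; auto | split; auto | simpl; lra]. }
  destruct (classic ((exists x, S1 (x, u1) /\ snd (h (x, u1)) = v2) \/
                     (exists y, S1 (y, v1) /\ snd (h (y, v1)) = u2)))
    as [[[x0 [Hx0 Hx0']] | [y0 [Hy0 Hy0']]] | Hn].
  - exists v2, u2. split; [now right|]. split.
    + intros x Hx. rewrite <- Hx0'. apply Hsame; auto.
    + intros y Hy. destruct (Hto y v1 Hy (or_intror eq_refl)) as [| H]; auto.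
      exfalso. apply (Hdiff x0 y); congruence.
  - exists v2, u2. split; [now right|]. split.
    + intros x Hx. destruct (Hto x u1 Hx (or_introl eq_refl)) as [H |]; auto.
      exfalso. apply (Hdiff x y0); congruence.
    + intros y Hy. rewrite <- Hy0'. apply Hsame; auto.
  - exists u2, v2. split; [now left|]. split.
    + intros x Hx. destruct (Hto x u1 Hx (or_introl eq_refl)) as [| H]; auto.
      exfalso. apply Hn. left. now exists x.
    + intros y Hy. destruct (Hto y v1 Hy (or_intror eq_refl)) as [H |]; auto.
      exfalso. apply Hn. right. now exists y.
Qed.

Lemma monotone_orientation A k : monotone A k ->
  exists ep, (ep = 1 \/ ep = -1) /\ forall p p', A p -> A p' -> snd p = snd p' ->
    fst p < fst p' -> ep * fst (k p) < ep * fst (k p').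
Proof.
  intros [Hm | Hm]; [exists 1 | exists (-1)]; (split; [auto|]);
    intros p p' Hp Hp' Hs Hf; destruct (proj1 (Hm p p' Hp Hp') (conj Hf Hs)) as [H _]; lra.
Qed.

Lemma monotone_inverse A B k g : (forall q, B q -> A (g q)) -> (forall q, B q -> k (g q) = q) ->
  monotone A k -> monotone B g.
Proof.
  intros Hg Hkg [Hm | Hm]; [left | right]; intros b b' Hb Hb'.
  - rewrite (Hm (g b) (g b') (Hg b Hb) (Hg b' Hb')), !Hkg by auto. tauto.
  - rewrite (Hm (g b') (g b) (Hg b' Hb') (Hg b Hb)), !Hkg by auto. tauto.
Qed.

Lemma bd_interval_bd S u v p0 p : bd_interval S u v p0 p -> bd S u v p.
Proof.
  destruct p0 as [a c], p as [b c']. intros [Hs Hall]. simpl in *. subst c'.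
  apply Hall. unfold Rmin, Rmax; destruct Rle_dec; lra.
Qed.

Definition clamp a b z := Rmax (Rmin a b) (Rmin z (Rmax a b)).

Lemma clamp_id a b z : Rmin a b <= z <= Rmax a b -> clamp a b z = z.
Proof. unfold clamp, Rmin, Rmax. intros. repeat destruct Rle_dec; lra. Qed.

Lemma clamp_in a b z : Rmin a b <= clamp a b z <= Rmax a b.
Proof. unfold clamp, Rmin, Rmax. repeat destruct Rle_dec; lra. Qed.

Lemma clamp_lipschitz a b z z' : Rabs (clamp a b z - clamp a b z') <= Rabs (z - z').
Proof. unfold clamp, Rmin, Rmax. repeat destruct Rle_dec; Rabs_cases; lra. Qed.

(* Continuity of [k] along the segment from [(a, c)] to [(b, c)], composed with [clamp] to
   make it total on [R], lets the intermediate value theorem hit every abscissa in between. *)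
Lemma segment_image S u v S' u' v' k : is_strip S u v ->
  (forall p, bd S u v p -> bd S' u' v' (k p)) -> cont_on (bd S u v) k -> monotone (bd S u v) k ->
  forall p0 q, bd S u v p0 -> bd_interval S u v p0 q -> bd_interval S' u' v' (k p0) (k q).
Proof.
  intros HS Hmap Hc Hm [a c] [b c'] Hp0 [Hq1 Hseg]. simpl in *. subst c'.
  assert (Hc_bd : c = u \/ c = v) by (destruct Hp0; auto).
  assert (Hheight : forall z, bd S u v (z, c) -> snd (k (z, c)) = snd (k (a, c)))
    by (intros; apply (monotone_same_height _ k Hm); auto).
  split; [apply Hheight, Hseg; unfold Rmin, Rmax; repeat destruct Rle_dec; lra|].
  intros y Hy.
  set (F := fun z => fst (k (clamp a b z, c))).
  assert (HF : continuity F).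
  { apply continuity_continuous. intro z. apply continuous_eps. intros eps He.
    set (w := clamp a b z). assert (Hw : bd S u v (w, c)) by apply Hseg, clamp_in.
    destruct (strip_row_open S u v w c HS (proj1 Hw)) as [rho [Hrho Hr]].
    destruct (Hc _ Hw eps He) as [d [Hd Hd']].
    exists (Rmin rho d). split; [now apply Rmin_pos|].
    intros z' Hz'. apply Rmin_Rgt in Hz' as [Hz1 Hz2].
    assert (Hl := clamp_lipschitz a b z' z).
    assert (Hw' : bd S u v (clamp a b z', c)) by (split; [apply Hr; unfold w; lra | exact Hc_bd]).
    assert (Hclose : dist2 (w, c) (clamp a b z', c) < d)
      by (rewrite dist2_row, Rabs_minus_sym; unfold w; lra).
    exact (proj1 (proj1 (dist2_lt_iff _ _ _) (Hd' _ Hw' Hclose))). }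
  assert (Hab : forall z, z = a \/ z = b -> clamp a b z = z)
    by (intros z Hz; apply clamp_id; unfold Rmin, Rmax; repeat destruct Rle_dec; lra).
  destruct (IVT_gen F a b y HF) as [z [Hz HFz]].
  { unfold F. rewrite !Hab by auto. exact Hy. }
  unfold F in HFz. rewrite clamp_id in HFz by auto.
  assert (Hz' : bd S u v (z, c)) by now apply Hseg.
  replace (y, snd (k (a, c))) with (k (z, c)); [now apply Hmap|].
  now rewrite (pair_eta (k (z, c))), HFz, Hheight.
Qed.

(** * The extension *)

Section Extension.
Variables (S1 S2 : pt -> Prop) (u1 v1 u2 v2 : R) (h g : pt -> pt) (c_lo c_hi ep : R).
Hypothesis S1_strip : is_strip S1 u1 v1.
Hypothesis S2_strip : is_strip S2 u2 v2.
Hypothesis h_maps : forall p, bd S1 u1 v1 p -> bd S2 u2 v2 (h p).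
Hypothesis g_maps : forall q, bd S2 u2 v2 q -> bd S1 u1 v1 (g q).
Hypothesis g_h : forall p, bd S1 u1 v1 p -> g (h p) = p.
Hypothesis h_g : forall q, bd S2 u2 v2 q -> h (g q) = q.
Hypothesis h_cont : cont_on (bd S1 u1 v1) h.
Hypothesis g_cont : cont_on (bd S2 u2 v2) g.
Hypothesis h_monotone : monotone (bd S1 u1 v1) h.
Hypothesis c_lo_hi : (c_lo = u2 /\ c_hi = v2) \/ (c_lo = v2 /\ c_hi = u2).
Hypothesis h_lo : forall x, S1 (x, u1) -> snd (h (x, u1)) = c_lo.
Hypothesis h_hi : forall x, S1 (x, v1) -> snd (h (x, v1)) = c_hi.
Hypothesis ep_sign : ep = 1 \/ ep = -1.
Hypothesis h_orient : forall p p', bd S1 u1 v1 p -> bd S1 u1 v1 p' -> snd p = snd p' ->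
  fst p < fst p' -> ep * fst (h p) < ep * fst (h p').

Let row c x := S1 (x, c).
Let fm x := ep * fst (h (x, u1)).
Let fp x := ep * fst (h (x, v1)).
Let Phi := interp (row u1) fm (row v1) fp.
Let gap1 := v1 - u1.
Let gap2 := Rabs (c_hi - c_lo).

(* Relative heights in [S1] and [S2], both [0] on the bottom of [S1] and its image. *)
Let rel1 t := (t - u1) / gap1.
Let rel2 t := (t - c_lo) / (c_hi - c_lo).
Let height1 s := u1 + gap1 * s.
Let height2 s := c_lo + (c_hi - c_lo) * s.

Definition ext (p : pt) : pt :=
  if Req_EM_T (snd p) u1 then h p else if Req_EM_T (snd p) v1 then h p else
  (ep * Phi (fst p) (rel1 (snd p)), height2 (rel1 (snd p))).

Definition ext_inv (q : pt) : pt :=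
  if Req_EM_T (snd q) u2 then g q else if Req_EM_T (snd q) v2 then g q else
  (family_inv Phi (ep * fst q) (rel2 (snd q)), height1 (rel2 (snd q))).

Lemma gap1_pos : 0 < gap1.
Proof. destruct S1_strip. unfold gap1. lra. Qed.

Lemma gap2_eq : gap2 = v2 - u2.
Proof.
  destruct S2_strip. unfold gap2.
  destruct c_lo_hi as [[-> ->] | [-> ->]]; Rabs_cases; lra.
Qed.

Lemma gap2_pos : 0 < gap2.
Proof. destruct S2_strip. rewrite gap2_eq. lra. Qed.

Lemma c_hi_lo_neq : c_hi - c_lo <> 0.
Proof. intro H. generalize gap2_pos. unfold gap2. rewrite H, Rabs_R0. lra. Qed.

Lemma ep_square : ep * ep = 1.
Proof. destruct ep_sign as [-> | ->]; ring. Qed.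

Lemma Rabs_ep_mult x : Rabs (ep * x) = Rabs x.
Proof. rewrite Rabs_mult. destruct ep_sign as [-> | ->]; Rabs_cases; lra. Qed.

Lemma rel1_interior t : u1 < t < v1 -> 0 < rel1 t < 1.
Proof.
  intro Ht. generalize gap1_pos; intro. unfold rel1, gap1 in *.
  split; [apply Rdiv_lt_0_compat | apply Rlt_div_l]; lra.
Qed.

Lemma rel2_interior t : u2 < t < v2 -> 0 < rel2 t < 1.
Proof.
  intro Ht. unfold rel2. destruct S2_strip as [Huv _].
  destruct c_lo_hi as [[-> ->] | [-> ->]].
  - split; [apply Rdiv_lt_0_compat | apply Rlt_div_l]; lra.
  - replace ((t - v2) / (u2 - v2)) with ((v2 - t) / (v2 - u2)) by (field; lra).
    split; [apply Rdiv_lt_0_compat | apply Rlt_div_l]; lra.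
Qed.

Lemma height1_interior s : 0 < s < 1 -> u1 < height1 s < v1.
Proof. intro. generalize gap1_pos; intro. unfold height1, gap1 in *. nra. Qed.

Lemma height2_interior s : 0 < s < 1 -> u2 < height2 s < v2.
Proof.
  intro. destruct S2_strip as [Huv _]. unfold height2.
  destruct c_lo_hi as [[-> ->] | [-> ->]]; nra.
Qed.

Lemma rel1_height1 s : rel1 (height1 s) = s.
Proof. generalize gap1_pos; intro. unfold rel1, height1. field. lra. Qed.

Lemma height1_rel1 t : height1 (rel1 t) = t.
Proof. generalize gap1_pos; intro. unfold rel1, height1. field. lra. Qed.

Lemma rel2_height2 s : rel2 (height2 s) = s.
Proof. generalize c_hi_lo_neq; intro. unfold rel2, height2. field. lra. Qed.

Lemma height2_rel2 t : height2 (rel2 t) = t.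
Proof. generalize c_hi_lo_neq; intro. unfold rel2, height2. field. lra. Qed.

Lemma Rabs_rel1_sub t s : Rabs (rel1 t - s) = Rabs (t - height1 s) / gap1.
Proof.
  generalize gap1_pos; intro.
  replace (rel1 t - s) with ((t - height1 s) / gap1) by (unfold rel1, height1; field; lra).
  rewrite Rabs_div, (Rabs_pos_eq gap1) by lra. reflexivity.
Qed.

Lemma Rabs_rel2_sub t s : Rabs (rel2 t - s) = Rabs (t - height2 s) / gap2.
Proof.
  generalize c_hi_lo_neq; intro.
  replace (rel2 t - s) with ((t - height2 s) / (c_hi - c_lo)) by (unfold rel2, height2; field; lra).
  now rewrite Rabs_div.
Qed.

Lemma dist2_height1 a b s s' eps : Rabs (a - b) < eps -> Rabs (s - s') < eps / gap1 ->
  dist2 (a, height1 s) (b, height1 s') < eps.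
Proof.
  intros Ha Hs. generalize gap1_pos; intro. apply dist2_lt_iff. simpl. split.
  - now rewrite Rabs_minus_sym.
  - replace (height1 s' - height1 s) with (gap1 * (s' - s)) by (unfold height1; ring).
    rewrite Rabs_mult, Rabs_pos_eq, Rabs_minus_sym by lra.
    apply Rlt_div_r in Hs; lra.
Qed.

Lemma dist2_height2 a b s s' eps : Rabs (a - b) < eps -> Rabs (s - s') < eps / gap2 ->
  dist2 (ep * a, height2 s) (ep * b, height2 s') < eps.
Proof.
  intros Ha Hs. generalize gap2_pos; intro. apply dist2_lt_iff. simpl. split.
  - replace (ep * b - ep * a) with (ep * (b - a)) by ring.
    now rewrite Rabs_ep_mult, Rabs_minus_sym.
  - replace (height2 s' - height2 s) with ((c_hi - c_lo) * (s' - s)) by (unfold height2; ring).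
    rewrite Rabs_mult, (Rabs_minus_sym s'). fold gap2.
    apply Rlt_div_r in Hs; lra.
Qed.

Lemma ext_bd p : snd p = u1 \/ snd p = v1 -> ext p = h p.
Proof. intro. unfold ext. do 2 (destruct Req_EM_T; auto). tauto. Qed.

Lemma ext_interior p : snd p <> u1 -> snd p <> v1 ->
  ext p = (ep * Phi (fst p) (rel1 (snd p)), height2 (rel1 (snd p))).
Proof. intros. unfold ext. do 2 (destruct Req_EM_T; [tauto|]). reflexivity. Qed.

Lemma ext_inv_bd q : snd q = u2 \/ snd q = v2 -> ext_inv q = g q.
Proof. intro. unfold ext_inv. do 2 (destruct Req_EM_T; auto). tauto. Qed.

Lemma ext_inv_interior q : snd q <> u2 -> snd q <> v2 ->
  ext_inv q = (family_inv Phi (ep * fst q) (rel2 (snd q)), height1 (rel2 (snd q))).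
Proof. intros. unfold ext_inv. do 2 (destruct Req_EM_T; [tauto|]). reflexivity. Qed.

Definition boundary_row (c s : R) (f : R -> R) : Prop :=
  c = height1 s /\ (c = u1 \/ c = v1) /\
  (forall x, S1 (x, c) -> h (x, c) = (ep * f x, height2 s)) /\
  increasing_on (row c) f /\
  (forall x, row c x -> continuous_within (row c) f x) /\
  boundary_limit Phi s (row c) f.

Lemma row_increasing c : c = u1 \/ c = v1 -> increasing_on (row c) (fun x => ep * fst (h (x, c))).
Proof.
  intros Hc y z Hy Hz Hyz. apply h_orient; [split | split | reflexivity | exact Hyz]; auto.
Qed.

Lemma row_continuous c : c = u1 \/ c = v1 ->
  forall x, row c x -> continuous_within (row c) (fun x => ep * fst (h (x, c))) x.
Proof.
  intros Hc x Hx eps He.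
  destruct (h_cont (x, c) (conj Hx Hc) eps He) as [d [Hd Hq]].
  exists d. split; [exact Hd|]. intros y Hy Hyx.
  assert (Hclose : dist2 (x, c) (y, c) < d) by now rewrite dist2_row, Rabs_minus_sym.
  destruct (proj1 (dist2_lt_iff _ _ _) (Hq (y, c) (conj Hy Hc) Hclose)) as [H _].
  replace (ep * fst (h (y, c)) - ep * fst (h (x, c)))
    with (ep * (fst (h (y, c)) - fst (h (x, c)))) by ring.
  now rewrite Rabs_ep_mult.
Qed.

Lemma h_on_row c s x : snd (h (x, c)) = height2 s ->
  h (x, c) = (ep * (ep * fst (h (x, c))), height2 s).
Proof. intro Hs. rewrite <- Rmult_assoc, ep_square, Rmult_1_l, <- Hs. apply pair_eta. Qed.

Lemma boundary_row_lo : boundary_row u1 0 fm.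
Proof.
  assert (Hinc := row_increasing u1 (or_introl eq_refl)).
  assert (Hcont := row_continuous u1 (or_introl eq_refl)).
  repeat split; auto.
  - unfold height1. ring.
  - intros x Hx. apply h_on_row. rewrite h_lo by exact Hx. unfold height2. ring.
  - apply interp_boundary_limit_0; auto using increasing_on_nondecreasing.
Qed.

Lemma boundary_row_hi : boundary_row v1 1 fp.
Proof.
  assert (Hinc := row_increasing v1 (or_intror eq_refl)).
  assert (Hcont := row_continuous v1 (or_intror eq_refl)).
  repeat split; auto.
  - unfold height1, gap1. ring.
  - intros x Hx. apply h_on_row. rewrite h_hi by exact Hx. unfold height2. ring.
  - apply interp_boundary_limit_1; auto using increasing_on_nondecreasing.
Qed.

Lemma Phi_lt s x x' : 0 < s < 1 -> x < x' -> Phi x s < Phi x' s.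
Proof. apply interp_lt_x. Qed.

Lemma Phi_surjective s y : 0 < s < 1 -> exists x, Phi x s = y.
Proof. apply interp_surjective. Qed.

Lemma Phi_continuous x0 s0 : 0 < s0 < 1 ->
  continuous (fun z : R * R => Phi (fst z) (snd z)) (x0, s0).
Proof. apply interp_continuous. Qed.

Lemma continuous_rel1 t : continuous rel1 t.
Proof.
  generalize gap1_pos; intro. apply (ex_derive_continuous (V := R_NormedModule)).
  unfold rel1. auto_derive. lra.
Qed.

Lemma continuous_rel2 t : continuous rel2 t.
Proof.
  generalize c_hi_lo_neq; intro. apply (ex_derive_continuous (V := R_NormedModule)).
  unfold rel2. now auto_derive.
Qed.

Lemma ext_continuous_interior p : u1 < snd p < v1 -> forall eps, 0 < eps -> exists d, 0 < d /\
  forall q, S1 q -> dist2 p q < d -> dist2 (ext p) (ext q) < eps.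
Proof.
  intros Hp eps He. destruct p as [x0 t0]. simpl in Hp.
  set (F1 := fun z : R * R => ep * Phi (fst z) (rel1 (snd z))).
  set (F2 := fun z : R * R => height2 (rel1 (snd z))).
  assert (C1 : continuous F1 (x0, t0)).
  { apply (continuous_mult (fun _ : R * R => ep) (fun z : R * R => Phi (fst z) (rel1 (snd z))));
      [apply continuous_const|].
    apply (continuous_comp_2 fst (fun z : R * R => rel1 (snd z)) Phi).
    - apply continuous_fst.
    - apply continuous_snd_comp, continuous_rel1.
    - now apply Phi_continuous, rel1_interior. }
  assert (C2 : continuous F2 (x0, t0)).
  { apply (continuous_snd_comp (fun t => height2 (rel1 t))), (continuous_comp rel1 height2);
      [apply continuous_rel1 | apply continuous_affine]. }
  destruct (continuous_dist2_pair F1 F2 (x0, t0) C1 C2 eps He) as [d [Hd K]].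
  exists (Rmin d (Rmin (t0 - u1) (v1 - t0))). split; [repeat apply Rmin_pos; lra|].
  intros [x t] Hq Hdq. pose proof (Rmin_l d (Rmin (t0 - u1) (v1 - t0))).
  apply dist2_lt_iff in Hdq as Ht. destruct Ht as [_ Ht]. simpl in Ht.
  apply Rmin_Rgt in Ht as [_ Ht]. apply Rmin_Rgt in Ht.
  rewrite !ext_interior by (simpl; Rabs_cases; lra).
  apply K. lra.
Qed.

Lemma ext_inv_continuous_interior q : u2 < snd q < v2 -> forall eps, 0 < eps -> exists d, 0 < d /\
  forall q', S2 q' -> dist2 q q' < d -> dist2 (ext_inv q) (ext_inv q') < eps.
Proof.
  intros Hq eps He. destruct q as [y0 t0]. simpl in Hq.
  set (F1 := fun z : R * R => family_inv Phi (ep * fst z) (rel2 (snd z))).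
  set (F2 := fun z : R * R => height1 (rel2 (snd z))).
  assert (C1 : continuous F1 (y0, t0)).
  { apply (continuous_comp_2 (fun z : R * R => ep * fst z) (fun z : R * R => rel2 (snd z))
                             (family_inv Phi)).
    - apply (continuous_mult (fun _ : R * R => ep) fst);
        [apply continuous_const | apply continuous_fst].
    - apply continuous_snd_comp, continuous_rel2.
    - apply family_inv_continuous; auto using Phi_lt, Phi_surjective, Phi_continuous.
      now apply rel2_interior. }
  assert (C2 : continuous F2 (y0, t0)).
  { apply (continuous_snd_comp (fun t => height1 (rel2 t))), (continuous_comp rel2 height1);
      [apply continuous_rel2 | apply continuous_affine]. }
  destruct (continuous_dist2_pair F1 F2 (y0, t0) C1 C2 eps He) as [d [Hd K]].
  exists (Rmin d (Rmin (t0 - u2) (v2 - t0))). split; [repeat apply Rmin_pos; lra|].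
  intros [y t] Hq' Hdq. pose proof (Rmin_l d (Rmin (t0 - u2) (v2 - t0))).
  apply dist2_lt_iff in Hdq as Ht. destruct Ht as [_ Ht]. simpl in Ht.
  apply Rmin_Rgt in Ht as [_ Ht]. apply Rmin_Rgt in Ht.
  rewrite !ext_inv_interior by (simpl; Rabs_cases; lra).
  apply K. lra.
Qed.

Lemma Rabs_rel1_lt t s d : Rabs (t - height1 s) < gap1 * d -> Rabs (rel1 t - s) < d.
Proof. intro H. generalize gap1_pos; intro. rewrite Rabs_rel1_sub. apply Rlt_div_l; lra. Qed.

Lemma Rabs_rel2_lt t s d : Rabs (t - height2 s) < gap2 * d -> Rabs (rel2 t - s) < d.
Proof. intro H. generalize gap2_pos; intro. rewrite Rabs_rel2_sub. apply Rlt_div_l; lra. Qed.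

Lemma ext_continuous_row c s f : boundary_row c s f ->
  forall x0, S1 (x0, c) -> forall eps, 0 < eps -> exists d, 0 < d /\
    forall q, S1 q -> dist2 (x0, c) q < d -> dist2 (ext (x0, c)) (ext q) < eps.
Proof.
  intros [Hc [Hc_bd [Hh [_ [Hcont Hlim]]]]] x0 Hx0 eps He.
  generalize gap1_pos gap2_pos; intros.
  rewrite (ext_bd (x0, c)) by auto.
  destruct (h_cont _ (conj Hx0 Hc_bd) eps He) as [e1 [He1 K1]].
  destruct (family_joint_limit Phi Phi_lt (row c) f s Hlim x0 Hx0
              (strip_row_open _ _ _ _ _ S1_strip Hx0) (Hcont x0 Hx0) eps He) as [e2 [He2 K2]].
  assert (HK : 0 < eps / gap2) by (apply Rdiv_lt_0_compat; lra).
  exists (Rmin (Rmin e1 e2) (gap1 * Rmin e2 (eps / gap2))).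
  split; [repeat apply Rmin_pos; try apply Rmult_lt_0_compat; try apply Rmin_pos; lra|].
  intros [x t] Hq Hd. pose proof (Rmin_l (Rmin e1 e2) (gap1 * Rmin e2 (eps / gap2))) as Hd1.
  apply dist2_lt_iff in Hd as Hxt. destruct Hxt as [Hx Ht]. simpl in Hx, Ht.
  apply Rmin_Rgt in Hx as [Hx _]. apply Rmin_Rgt in Hx as [_ Hx].
  apply Rmin_Rgt in Ht as [_ Ht].
  destruct (classic (t = u1 \/ t = v1)) as [Ht_bd | Ht_int].
  - rewrite (ext_bd (x, t)) by auto.
    apply K1; [now split | generalize (Rmin_l e1 e2); lra].
  - rewrite (ext_interior (x, t)), Hh by (simpl; tauto || exact Hx0). simpl.
    assert (Hs : 0 < rel1 t < 1)
      by (apply rel1_interior, (strip_interior S1 u1 v1 (x, t)); auto; tauto).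
    rewrite Hc in Ht. apply Rabs_rel1_lt, Rmin_Rgt in Ht as [Hs1 Hs2].
    apply dist2_height2.
    + rewrite Rabs_minus_sym. now apply K2.
    + now rewrite Rabs_minus_sym.
Qed.

Lemma ext_inv_continuous_row c s f : boundary_row c s f ->
  forall x0, S1 (x0, c) -> forall eps, 0 < eps -> exists d, 0 < d /\
    forall q, S2 q -> dist2 (h (x0, c)) q < d -> dist2 (ext_inv (h (x0, c))) (ext_inv q) < eps.
Proof.
  intros [Hc [Hc_bd [Hh [Hinc [_ Hlim]]]]] x0 Hx0 eps He.
  generalize gap1_pos gap2_pos; intros.
  assert (Hbd0 : bd S1 u1 v1 (x0, c)) by now split.
  assert (Hbd1 := h_maps _ Hbd0).
  rewrite (ext_inv_bd (h (x0, c))) by (destruct Hbd1; auto).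
  destruct (g_cont _ Hbd1 eps He) as [e1 [He1 K1]].
  destruct (family_inv_joint_limit Phi Phi_lt Phi_surjective (row c) f s Hlim x0 Hinc Hx0
              (strip_row_open _ _ _ _ _ S1_strip Hx0) eps He) as [e2 [He2 K2]].
  assert (HK : 0 < eps / gap1) by (apply Rdiv_lt_0_compat; lra).
  exists (Rmin (Rmin e1 e2) (gap2 * Rmin e2 (eps / gap1))).
  split; [repeat apply Rmin_pos; try apply Rmult_lt_0_compat; try apply Rmin_pos; lra|].
  intros [y t] Hq Hd. pose proof (Rmin_l (Rmin e1 e2) (gap2 * Rmin e2 (eps / gap1))) as Hd1.
  rewrite (Hh x0 Hx0) in Hd. apply dist2_lt_iff in Hd as Hyt. destruct Hyt as [Hy Ht].
  simpl in Hy, Ht. apply Rmin_Rgt in Hy as [Hy _]. apply Rmin_Rgt in Hy as [_ Hy].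
  apply Rmin_Rgt in Ht as [_ Ht].
  destruct (classic (t = u2 \/ t = v2)) as [Ht_bd | Ht_int].
  - rewrite (ext_inv_bd (y, t)) by auto.
    apply K1; [now split | rewrite (Hh x0 Hx0); generalize (Rmin_l e1 e2); lra].
  - rewrite (ext_inv_interior (y, t)), g_h by (simpl; tauto || exact Hbd0). simpl.
    assert (Hs : 0 < rel2 t < 1)
      by (apply rel2_interior, (strip_interior S2 u2 v2 (y, t)); auto; tauto).
    apply Rabs_rel2_lt, Rmin_Rgt in Ht as [Hs1 Hs2].
    rewrite Hc. apply dist2_height1.
    + rewrite Rabs_minus_sym. apply K2; [exact Hs | exact Hs1|].
      replace (ep * y - f x0) with (ep * (y - ep * f x0))
        by (generalize ep_square; intro; nra).
      now rewrite Rabs_ep_mult.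
    + now rewrite Rabs_minus_sym.
Qed.

Lemma ext_continuous : cont_on S1 ext.
Proof.
  intros [x0 t0] Hp.
  destruct (classic (t0 = u1)) as [-> | Hu].
  { exact (ext_continuous_row u1 0 fm boundary_row_lo x0 Hp). }
  destruct (classic (t0 = v1)) as [-> | Hv].
  { exact (ext_continuous_row v1 1 fp boundary_row_hi x0 Hp). }
  apply ext_continuous_interior, (strip_interior S1 u1 v1 (x0, t0)); auto.
Qed.

Lemma ext_inv_continuous : cont_on S2 ext_inv.
Proof.
  intros q Hq.
  destruct (classic (snd q = u2 \/ snd q = v2)) as [Hq_bd | Hq_int].
  - assert (Hbq : bd S2 u2 v2 q) by now split.
    rewrite <- (h_g q Hbq). destruct (g_maps q Hbq) as [Hx0 [Hc | Hc]];
      rewrite (pair_eta (g q)), Hc in Hx0 |- *.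
    + exact (ext_inv_continuous_row u1 0 fm boundary_row_lo _ Hx0).
    + exact (ext_inv_continuous_row v1 1 fp boundary_row_hi _ Hx0).
  - apply ext_inv_continuous_interior, (strip_interior S2); auto; tauto.
Qed.

Lemma ext_maps p : S1 p -> S2 (ext p).
Proof.
  intro Hp. destruct (classic (snd p = u1 \/ snd p = v1)) as [Hb | Hb].
  - rewrite ext_bd by exact Hb. now destruct (h_maps p (conj Hp Hb)).
  - rewrite ext_interior by tauto. apply S2_strip, height2_interior, rel1_interior.
    apply (strip_interior S1); auto; tauto.
Qed.

Lemma ext_inv_maps q : S2 q -> S1 (ext_inv q).
Proof.
  intro Hq. destruct (classic (snd q = u2 \/ snd q = v2)) as [Hb | Hb].
  - rewrite ext_inv_bd by exact Hb. now destruct (g_maps q (conj Hq Hb)).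
  - rewrite ext_inv_interior by tauto. apply S1_strip, height1_interior, rel2_interior.
    apply (strip_interior S2); auto; tauto.
Qed.

Lemma ext_inv_ext p : S1 p -> ext_inv (ext p) = p.
Proof.
  intro Hp. destruct (classic (snd p = u1 \/ snd p = v1)) as [Hb | Hb].
  - rewrite ext_bd by exact Hb. assert (Hb2 := h_maps p (conj Hp Hb)).
    rewrite ext_inv_bd by (destruct Hb2; auto). apply g_h. now split.
  - assert (Hs : 0 < rel1 (snd p) < 1) by (apply rel1_interior, (strip_interior S1); auto; tauto).
    assert (Ht := height2_interior _ Hs).
    rewrite ext_interior, ext_inv_interior by (simpl; tauto || lra). simpl.
    rewrite rel2_height2, <- Rmult_assoc, ep_square, Rmult_1_l, family_inv_cancel, height1_rel1
      by auto using Phi_lt, Phi_surjective.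
    symmetry. apply pair_eta.
Qed.

Lemma ext_ext_inv q : S2 q -> ext (ext_inv q) = q.
Proof.
  intro Hq. destruct (classic (snd q = u2 \/ snd q = v2)) as [Hb | Hb].
  - rewrite ext_inv_bd by exact Hb. assert (Hb2 := g_maps q (conj Hq Hb)).
    rewrite ext_bd by (destruct Hb2; auto). apply h_g. now split.
  - assert (Hs : 0 < rel2 (snd q) < 1) by (apply rel2_interior, (strip_interior S2); auto; tauto).
    assert (Ht := height1_interior _ Hs).
    rewrite ext_inv_interior, ext_interior by (simpl; tauto || lra). simpl.
    rewrite rel1_height1, family_inv_spec, <- Rmult_assoc, ep_square, Rmult_1_l, height2_rel2
      by auto using Phi_surjective.
    symmetry. apply pair_eta.
Qed.

Lemma ext_homeo : homeo_on S1 S2 ext.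
Proof.
  split; [exact ext_maps|].
  exists ext_inv.
  repeat split;
    auto using ext_inv_maps, ext_inv_ext, ext_ext_inv, ext_continuous, ext_inv_continuous.
Qed.

Lemma ext_leaves L : leaf S1 u1 v1 L -> leaf S2 u2 v2 (image ext L).
Proof.
  intros [[t [Ht HL]] | [p0 [Hp0 HL]]].
  - left. exists (height2 (rel1 t)). split; [now apply height2_interior, rel1_interior|].
    intro q; split.
    + intros [p [Lp ->]]. apply HL in Lp.
      rewrite ext_interior by lra. simpl. now rewrite Lp.
    + intro Hq. exists (family_inv Phi (ep * fst q) (rel1 t), t). split; [now apply HL|].
      assert (Hs := rel1_interior t Ht).
      rewrite ext_interior by (simpl; lra). simpl.
      rewrite family_inv_spec, <- Rmult_assoc, ep_square, Rmult_1_l, <- Hq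
        by auto using Phi_surjective.
      apply pair_eta.
  - right. exists (h p0). split; [now apply h_maps|]. intro q. split.
    + intros [p [Lp ->]]. apply HL in Lp.
      rewrite ext_bd by (destruct (bd_interval_bd _ _ _ _ _ Lp); auto).
      exact (segment_image _ _ _ _ _ _ h S1_strip h_maps h_cont h_monotone p0 p Hp0 Lp).
    + intro Hq. assert (Hbq := bd_interval_bd _ _ _ _ _ Hq). exists (g q). split.
      * apply HL. rewrite <- (g_h p0 Hp0).
        apply (segment_image _ _ _ _ _ _ g S2_strip g_maps g_cont
                 (monotone_inverse _ _ _ _ g_maps h_g h_monotone)); auto.
      * rewrite ext_bd, h_g; auto. destruct (g_maps q Hbq); auto.
Qed.

Lemma ext_foliated_extension :
  foliated_homeo S1 u1 v1 S2 u2 v2 ext /\ forall p, bd S1 u1 v1 p -> ext p = h p.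
Proof.
  split; [split; [exact ext_homeo | exact ext_leaves]|].
  intros p [_ Hp]. now apply ext_bd.
Qed.

End Extension.

Theorem mainTheorem2 (S1 : pt -> Prop) (u1 v1 : R) (S2 : pt -> Prop) (u2 v2 : R)
  (h : pt -> pt) :
  is_strip S1 u1 v1 -> is_strip S2 u2 v2 ->
  homeo_on (bd S1 u1 v1) (bd S2 u2 v2) h ->
  monotone (bd S1 u1 v1) h ->
  exists H : pt -> pt,
    foliated_homeo S1 u1 v1 S2 u2 v2 H /\
    forall p, bd S1 u1 v1 p -> H p = h p.
Proof.
  intros HS1 HS2 Hh Hm.
  destruct (boundary_heights S1 u1 v1 S2 u2 v2 h HS1 HS2 Hh Hm)
    as [c_lo [c_hi [Hc [Hlo Hhi]]]].
  destruct (monotone_orientation _ h Hm) as [ep [Hep Hor]].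
  destruct Hh as [Hmaps [g [Hgmaps [Hgh [Hhg [Hhc Hgc]]]]]].
  eexists. eapply ext_foliated_extension; eauto.
Qed.
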